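(* Assume the standing assumptions in the context. Let $S\subsetneq S^*$ and $k=|S|$. Then $$\max_{i\in[d]\setminus S}|Z_i^S|\ \ge\ \sqrt{\frac{\rho^3}{L}}\,\frac{1}{\sqrt{s^*-k}}\,\|\beta^*-\beta^S\|_2\ \ge\ \sqrt{\frac{\rho^3}{L}}\,\frac{1}{\sqrt{s^*-k}}\,\|\beta^*_{S^*\setminus S}\|_2.$$
   Context: Standing assumptions: $(x,y)$ random with $x\in\mathbb{R}^d$, $y\in\mathbb{R}$; $\mathbb{E}[x]=0$; $y=\langle\beta^*,x\rangle+\epsilon$ with $\mathbb{E}[\epsilon\mid x]=0$; $S^*=\mathrm{supp}(\beta^* )$, $s^*=|S^*|$; $\Sigma$ the covariance of $x$, $\Sigma_F$ its principal submatrix on $F$; there are $0<\rho\le L$ with all eigenvalues of $\Sigma_F$ in $[\rho,L]$ for all $|F|=s^*$; for $|F|=s^*$, $\mu_F:=\max_{j\notin F}\|\Sigma_F^{-1}\mathrm{Cov}(x_F,x_j)\|_1<1$; $|y|<1$ and $\|x\|_\infty<M$ almost surely. $\mathcal{R}(\beta)=\mathbb{E}[(y-\langle x,\beta\rangle)^2]$, $\beta^S=\arg\min_{\mathrm{supp}(\beta)\subseteq S}\mathcal{R}(\beta)$, $Z_i^S=\mathbb{E}[x_i(y-\langle x,\beta^S\rangle)]$. For a vector $v$ and $F\subseteq[d]$, $v_F$ is its restriction to coordinates in $F$. *)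

From HB Require Import structures.
From mathcomp Require Import all_boot all_order all_algebra.
From mathcomp Require Import all_classical all_reals all_analysis.
Set Implicit Arguments. Unset Strict Implicit. Unset Printing Implicit Defensive.
Import Order.TTheory GRing.Theory Num.Theory.
Local Open Scope classical_set_scope.
Local Open Scope ring_scope.

Section Defs.
Context {dT : measure_display} {T : measurableType dT} {R : realType}.
Variable (P : probability T R).

(* real-valued expectation (all variables involved are a.s. bounded) *)
Definition Ex (X : T -> R) : R := fine ('E_P[X])%E.

Definition Sigma (d : nat) (x : 'I_d -> T -> R) : 'M[R]_d :=
  \matrix_(i, j) fine (covariance P (x i) (x j)).

Definition SigmaF (d : nat) (x : 'I_d -> T -> R) (F : {set 'I_d}) : 'M[R]_#|F| :=
  \matrix_(i, j) Sigma x (enum_val i) (enum_val j).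

Definition CovFj (d : nat) (x : 'I_d -> T -> R) (F : {set 'I_d}) (j : 'I_d)
  : 'cV[R]_#|F| := \col_i Sigma x (enum_val i) j.

Definition inner (d : nat) (x : 'I_d -> T -> R) (b : 'I_d -> R) : T -> R :=
  fun t => \sum_(i < d) b i * x i t.

Definition risk (d : nat) (x : 'I_d -> T -> R) (y : T -> R) (b : 'I_d -> R) : R :=
  Ex (fun t => (y t - inner x b t) ^+ 2).

Definition supp (d : nat) (b : 'I_d -> R) : {set 'I_d} := [set i | b i != 0].

Definition is_betaS (d : nat) (x : 'I_d -> T -> R) (y : T -> R)
  (S : {set 'I_d}) (bS : 'I_d -> R) : Prop :=
  supp bS \subset S /\
  forall b : 'I_d -> R, supp b \subset S -> risk x y bS <= risk x y b.

Definition Zc (d : nat) (x : 'I_d -> T -> R) (y : T -> R) (bS : 'I_d -> R)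
  (i : 'I_d) : R := Ex (fun t => x i t * (y t - inner x bS t)).

Definition sigma_x (d : nat) (x : 'I_d -> T -> R) : set (set T) :=
  <<s [set A | exists i : 'I_d, exists B : set R, measurable B /\ A = x i @^-1` B] >>.

(* E[eps | x] = 0 : integral of eps over every x-measurable event vanishes *)
Definition cond_mean_zero (d : nat) (x : 'I_d -> T -> R) (eps : T -> R) : Prop :=
  forall A : set T, sigma_x x A -> expectation P (fun t : T => \1_A t * eps t) = 0%E.

Definition l2norm (d : nat) (b : 'I_d -> R) : R := Num.sqrt (\sum_(i < d) b i ^+ 2).

End Defs.

From HB Require Import structures.
From mathcomp Require Import all_boot all_order all_algebra.
From mathcomp Require Import all_classical all_reals all_analysis.
From mathcomp Require Import ring lra measurable_realfun.
Import Order.TTheory GRing.Theory Num.Theory numFieldNormedType.Exports.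
Local Open Scope classical_set_scope.
Local Open Scope ring_scope.

(* Put [Delta = beta* - beta^S] and [D = S* \ S], so [|D| = s* - k].
   - Since [E[eps | x] = 0] and everything is bounded, [E[x_i eps] = 0]; hence
     [Z_i^S = (Sigma Delta)_i] for every [i].
   - First-order optimality of [beta^S] gives [Z_i^S = 0] on [S], and [Delta]
     vanishes off [S*]; so [Delta' Sigma Delta = sum_(i in D) Delta_i Z_i^S].
   - The eigenvalues of [Sigma_S*] are at least [rho] (Rayleigh bound), and
     Cauchy-Schwarz on [D] gives
       [rho |Delta|^2 <= Delta' Sigma Delta <= max_(i notin S) |Z_i^S| sqrt|D| |Delta|];
     since [sqrt (rho^3 / L) <= rho] this is the first claim.  The second one
     holds because [Delta] agrees with [beta*] on [D]. *)

(* A quadratic [t |-> 2 t b + t^2 a] that is nonnegative everywhere has no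
   linear term; this is the first-order condition at a minimiser. *)
Lemma nonneg_quadratic_linear_coef (R : realFieldType) (a b : R) :
  (forall t, 0 <= 2 * t * b + t ^+ 2 * a) -> b = 0.
Proof.
move=> nonneg; apply/eqP; apply/negPn/negP => b_neq0.
have a_le := ler_norm a.
have D_gt0 : 0 < `|a| + 1 by have := normr_ge0 a; lra.
have := nonneg (- b / (`|a| + 1)).
have -> : 2 * (- b / (`|a| + 1)) * b + (- b / (`|a| + 1)) ^+ 2 * a
   = b ^+ 2 / (`|a| + 1) ^+ 2 * (a - 2 * (`|a| + 1)).
  by field; rewrite gt_eqF.
have coef_gt0 : 0 < b ^+ 2 / (`|a| + 1) ^+ 2.
  by apply: divr_gt0; [rewrite exprn_even_gt0 | exact: exprn_gt0].
have neg : a - 2 * (`|a| + 1) < 0 by lra.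
by rewrite pmulr_rge0 // leNgt neg.
Qed.

(* Cauchy-Schwarz against the constant vector: the l1-norm of [f] on [D] is at
   most [sqrt #|D|] times its l2-norm. *)
Lemma sum_abs_le_sqrt_card {R : rcfType} {I : finType} (D : {set I}) (f : I -> R) :
  \sum_(i in D) `|f i| <= Num.sqrt #|D|%:R * Num.sqrt (\sum_(i in D) f i ^+ 2).
Proof.
pose g i := f i ^+ 2.
have g_ge0 i : 0 <= g i by exact: sqr_ge0.
rewrite -sqrtrM ?ler0n // -[X in X <= _]ger0_norm ?sumr_ge0 // -sqrtr_sqr.
rewrite ler_sqrt ?mulr_ge0 ?ler0n ?sumr_ge0 //; last by move=> i _; exact: g_ge0.
have amgm i j : `|f i| * `|f j| <= (g i + g j) / 2.
  rewrite /g -(real_normK (num_real (f i))) -(real_normK (num_real (f j))).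
  have := sqr_ge0 (`|f i| - `|f j|); nra.
have swap : \sum_(i in D) \sum_(j in D) g j = \sum_(i in D) \sum_(j in D) g i.
  exact: exchange_big.
rewrite expr2 mulr_suml; apply: (le_trans (ler_sum _ (fun i _ =>
  (_ : _ <= \sum_(j in D) (g i + g j) / 2)))) => [i _|].
  by rewrite mulr_sumr; apply: ler_sum => j _; exact: amgm.
under eq_bigr do rewrite -mulr_suml big_split /=.
have half (z : R) : (z + z) / 2 = z by field.
rewrite -mulr_suml big_split /= swap half.
under eq_bigr do rewrite sumr_const.
by rewrite sumrMnl mulr_natl.
Qed.

(* The scalar core of the theorem: from [rho N^2 <= Z (sqrt m) N] we get
   [N rho / sqrt m <= Z], and [sqrt (rho^3 / L) <= rho] since [rho <= L]. *)
Lemma scaled_corr_bound (R : rcfType) (rho L m N Z : R) :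
  0 < rho -> rho <= L -> 0 < m -> 0 <= N -> 0 <= Z ->
  rho * N ^+ 2 <= Z * (Num.sqrt m * N) ->
  Num.sqrt (rho ^+ 3 / L) * (Num.sqrt m)^-1 * N <= Z.
Proof.
move=> rho_gt0 rho_le_L m_gt0 N_ge0 Z_ge0 energy.
have sm_gt0 : 0 < Num.sqrt m by rewrite sqrtr_gt0.
have c_le : Num.sqrt (rho ^+ 3 / L) <= rho.
  rewrite -[leRHS](ger0_norm (ltW rho_gt0)) -sqrtr_sqr ler_sqrt ?sqr_ge0 //.
  by rewrite ler_pdivrMr ?(lt_le_trans rho_gt0) // exprSr ler_wpM2l ?sqr_ge0.
have [->|N_neq0] := eqVneq N 0; first by rewrite mulr0.
have N_gt0 : 0 < N by rewrite lt_def N_neq0.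
apply: le_trans (_ : rho / Num.sqrt m * N <= _).
  by rewrite ler_wpM2r // ler_wpM2r // invr_ge0 ltW.
rewrite mulrAC ler_pdivrMr // -(ler_pM2r N_gt0); nra.
Qed.

(* Without a spectral theorem at hand, we minimise the form on the compact
   unit sphere and show, by a first-order argument, that a minimiser is an
   eigenvector whose eigenvalue is the minimum. *)
Section Rayleigh.
Context {R : realType} {n : nat} (A : 'M[R]_n).

Definition qform (u v : 'rV[R]_n) : R :=
  \sum_i \sum_j u ord0 i * A i j * v ord0 j.
Definition sqnorm (v : 'rV[R]_n) : R := \sum_i v ord0 i ^+ 2.

Lemma sqnorm_ge0 v : 0 <= sqnorm v.
Proof. by apply: sumr_ge0 => i _; exact: sqr_ge0. Qed.

Lemma sqnorm_eq0 v : sqnorm v = 0 -> v = 0.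
Proof.
move=> /eqP; rewrite psumr_eq0 => [/allP v0|i _]; last exact: sqr_ge0.
apply/rowP => i; rewrite mxE; apply/eqP; rewrite -sqrf_eq0.
exact: (implyP (v0 i (mem_index_enum i))).
Qed.

Lemma qformZ a u : qform (a *: u) (a *: u) = a ^+ 2 * qform u u.
Proof.
rewrite /qform !mulr_sumr; apply: eq_bigr => i _.
by rewrite !mulr_sumr; apply: eq_bigr => j _; rewrite !mxE; ring.
Qed.

Lemma sqnormZ a u : sqnorm (a *: u) = a ^+ 2 * sqnorm u.
Proof. by rewrite /sqnorm !mulr_sumr; apply: eq_bigr => i _; rewrite !mxE; ring. Qed.

Lemma sqnorm_expand c w t : sqnorm (c + t *: w) =
  sqnorm c + 2 * t * (\sum_i c ord0 i * w ord0 i) + t ^+ 2 * sqnorm w.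
Proof.
rewrite /sqnorm !mulr_sumr -!big_split /=; apply: eq_bigr => i _.
by rewrite !mxE; ring.
Qed.

Lemma continuous_qform : continuous (fun v => qform v v).
Proof.
have sum_cont := @continuous_big R _ +%R 0 xpredT add_continuous.
apply: (sum_cont) => i _; apply: (sum_cont) => j _ v.
apply: (@continuousM _ _ (fun v : 'rV[R]_n => v ord0 i * A i j)); last exact: coord_continuous.
by apply: continuousM; [exact: coord_continuous | exact: cst_continuous].
Qed.

Lemma continuous_sqnorm : continuous sqnorm.
Proof.
have sum_cont := @continuous_big R _ +%R 0 xpredT add_continuous.
apply: (sum_cont) => i _ v.
by apply: (@continuousM _ _ (fun v : 'rV[R]_n => v ord0 i) (fun v => v ord0 i));
  exact: coord_continuous.
Qed.

Lemma qform_min_on_sphere : (0 < n)%N ->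
  exists2 c, sqnorm c = 1 & forall u, qform c c * sqnorm u <= qform u u.
Proof.
move=> n_gt0; pose K := [set v : 'rV[R]_n | sqnorm v = 1].
pose e : 'rV[R]_n := \row_j (j == Ordinal n_gt0)%:R.
have eK : K e.
  rewrite /K /= /sqnorm (bigD1 (Ordinal n_gt0)) //= big1 ?addr0.
    by rewrite mxE eqxx expr1n.
  by move=> j /negPf hj; rewrite mxE hj expr0n.
have K_closed : closed K.
  apply: (@preimage_closed _ _ sqnorm [set 1]) => [v _|].
    exact: continuous_sqnorm.
  by apply: compact_closed; [exact: Rhausdorff | exact: compact_set1].
have K_compact : compact K.
  apply: (subclosed_compact K_closed (rV_compact (fun=> @segment_compact R (-1) 1))).
  move=> w /= w_unit i; rewrite in_itv /=.
  have : w ord0 i ^+ 2 <= 1.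
    rewrite -w_unit /sqnorm (bigD1 i) //= lerDl.
    by apply: sumr_ge0 => j _; exact: sqr_ge0.
  by move=> h; apply/andP; split; nra.
have [c cK c_min] := compact_EVT_min (ex_intro _ e eK) K_compact
  (continuous_subspaceT continuous_qform).
move: cK; rewrite inE => c_unit; exists c => // u.
have [u0|u_neq0] := eqVneq u 0.
  have u_zero i : u ord0 i = 0 by rewrite u0 mxE.
  have -> : sqnorm u = 0 by rewrite /sqnorm big1 // => i _; rewrite u_zero expr0n.
  rewrite mulr0 /qform big1 // => i _.
  by rewrite big1 // => j _; rewrite u_zero !mul0r.
have su_gt0 : 0 < sqnorm u.
  by rewrite lt_def sqnorm_ge0 andbT; apply: contra u_neq0 => /eqP/sqnorm_eq0->.
pose w := (Num.sqrt (sqnorm u))^-1 *: u.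
have wK : K w.
  by rewrite /K /= sqnormZ exprVn sqr_sqrtr ?sqnorm_ge0 // mulVf ?gt_eqF.
have := c_min w; rewrite inE => /(_ wK).
rewrite qformZ exprVn sqr_sqrtr ?sqnorm_ge0 // => h.
by rewrite -ler_pdivlMr // mulrC.
Qed.

Hypothesis A_sym : forall i j, A i j = A j i.

(* By symmetry the cross terms of [qform (c + t w)] coincide. *)
Lemma qform_expand c w t : qform (c + t *: w) (c + t *: w) =
  qform c c + 2 * t * qform c w + t ^+ 2 * qform w w.
Proof.
have -> : 2 * t * qform c w = t * qform c w + t * qform w c.
  rewrite [qform w c]/qform exchange_big /=.
  rewrite (_ : \sum__ _ = qform c w); first by ring.
  by apply: eq_bigr => i _; apply: eq_bigr => j _; rewrite A_sym; ring.
rewrite /qform !mulr_sumr -!big_split /=; apply: eq_bigr => i _.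
by rewrite !mulr_sumr -!big_split /=; apply: eq_bigr => j _; rewrite !mxE; ring.
Qed.

(* A unit minimiser of the Rayleigh quotient is an eigenvector, with the
   minimal value as eigenvalue: along every direction [w] the form minus
   [lam] times the norm is a nonnegative quadratic in [t] without constant
   term, so its linear term vanishes (Lagrange condition). *)
Lemma qform_minimizer_eigenvector c : sqnorm c = 1 ->
  (forall u, qform c c * sqnorm u <= qform u u) -> c *m A = qform c c *: c.
Proof.
move=> c_unit c_min; set lam := qform c c.
have lagrange w : qform c w = lam * \sum_i c ord0 i * w ord0 i.
  apply/eqP; rewrite -subr_eq0; apply/eqP.
  apply: (@nonneg_quadratic_linear_coef _ (qform w w - lam * sqnorm w)) => t.
  have := c_min (c + t *: w).
  rewrite qform_expand sqnorm_expand c_unit -/lam; nra.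
apply/rowP => j; rewrite !mxE.
pose e : 'rV[R]_n := \row_k (k == j)%:R.
have pick (F : 'I_n -> R) : \sum_i F i * e ord0 i = F j.
  rewrite (bigD1 j) //= big1 ?addr0 => [|k /negPf k_neq]; rewrite mxE.
    by rewrite eqxx mulr1.
  by rewrite k_neq mulr0.
have := lagrange e; rewrite pick => <-.
by rewrite /qform; apply: eq_bigr => i _; rewrite pick.
Qed.

Lemma rayleigh_bound (rho : R) :
  (forall a, eigenvalue A a -> rho <= a) -> forall v, rho * sqnorm v <= qform v v.
Proof.
move=> eig_ge v; have [n0|n_gt0] := posnP n.
  have empty (F : 'I_n -> R) : \sum_i F i = 0.
    by apply: big1 => i; move: (ltn_ord i); rewrite [X in (_ < X)%N]n0.
  by rewrite /sqnorm /qform !empty mulr0.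
have [c c_unit c_min] := qform_min_on_sphere n_gt0.
have rho_le : rho <= qform c c.
  apply: eig_ge; apply/eigenvalueP; exists c.
    exact: qform_minimizer_eigenvector.
  apply/eqP => c0; move: c_unit; rewrite c0 /sqnorm big1 => [/eqP|i _].
    by rewrite eq_sym oner_eq0.
  by rewrite mxE expr0n.
by apply: le_trans (c_min v); rewrite ler_wpM2r ?sqnorm_ge0.
Qed.
End Rayleigh.

(* A number bounded by [C / (n + 1)] for every [n] vanishes; this turns
   approximations of mesh [1 / (n + 1)] into an exact identity. *)
Lemma eq0_le_div_succ (R : archiRealFieldType) (v C : R) :
  (forall n : nat, `|v| <= C / n.+1%:R) -> v = 0.
Proof.
move=> v_le; apply/eqP; apply/negPn/negP => v_neq0.
have v_gt0 : 0 < `|v| by rewrite normr_gt0.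
have := v_le (Num.truncn (C / `|v|)).
have := truncnS_gt (C / `|v|).
set m := (Num.truncn _).+1%:R => Cv_lt_m.
have m_gt0 : 0 < m by rewrite /m ltr0n.
rewrite ler_pdivlMr // => vm_le_C.
have : C / `|v| * `|v| < m * `|v| by rewrite ltr_pM2r.
rewrite divfK ?gt_eqF //; lra.
Qed.

Lemma in_itv_co_classic (R : realType) (a b z : R) :
  (z \in `[a, b[%classic) = (a <= z < b).
Proof.
by apply/idP/idP => [/set_mem /= | h]; [rewrite in_itv | apply: mem_set; rewrite /= in_itv].
Qed.

(* The staircase function of mesh [1/h] on [[-K/h, K/h)]: on each cell
   [[a_k, a_k + 1/h)], with [a_k = (k - K)/h], it takes the value [a_k]. *)
Definition staircase {R : realType} (h : R) (K : nat) (z : R) : R :=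
  \sum_(k < K + K) ((k%:R - K%:R) / h) *
    (z \in `[(k%:R - K%:R) / h, (k%:R - K%:R) / h + h^-1[%classic)%:R.

Lemma staircase_close (R : realType) (h Mx z : R) (K : nat) :
  0 < h -> `|z| < Mx -> Mx * h <= K%:R -> `|z - staircase h K z| <= h^-1.
Proof.
move=> h_gt0 z_lt Mx_le.
have zh_lt : `|z * h| < K%:R.
  by rewrite normrM (gtr0_norm h_gt0); apply: lt_le_trans Mx_le; rewrite ltr_pM2r.
pose s := z * h + K%:R; have s_def : s = z * h + K%:R by [].
have s_ge0 : 0 <= s by move: zh_lt; rewrite ltr_norml /s => /andP[]; lra.
pose k0 := Num.truncn s.
have /andP[k0_le k0_gt] := truncn_itv s_ge0.
have k0_lt : (k0 < K + K)%N.
  by rewrite -(ltr_nat R) natrD; move: zh_lt; rewrite ltr_norml => /andP[_ ?]; lra.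
have h_neq0 : h != 0 by rewrite gt_eqF.
have cell k :
    (z \in `[(k%:R - K%:R) / h, (k%:R - K%:R) / h + h^-1[%classic) = (k == k0).
  have lo : ((k%:R - K%:R) / h <= z) = (k%:R <= s).
    by rewrite -(ler_pM2r h_gt0) divfK // /s; apply/idP/idP => ?; lra.
  have hi : (z < (k%:R - K%:R) / h + h^-1) = (s < k.+1%:R).
    by rewrite -(ltr_pM2r h_gt0) mulrDl divfK // mulVf // /s -natr1; apply/idP/idP => ?; lra.
  by rewrite in_itv_co_classic lo hi -truncn_eq // eq_sym.
rewrite /staircase (bigD1 (Ordinal k0_lt)) //= big1 => [|k k_neq]; last first.
  by rewrite cell; case: eqP => [k_eq|]; [case/eqP: k_neq; apply: val_inj | rewrite mulr0].
rewrite cell eqxx mulr1 addr0.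
have -> : z - (k0%:R - K%:R) / h = (s - k0%:R) / h by rewrite /s; field.
rewrite ger0_norm; last by apply: divr_ge0; [lra | exact: ltW].
by rewrite -[X in _ <= X]mul1r ler_pM2r ?invr_gt0 //; lra.
Qed.

Section BoundedExpectation.
Context {dT : measure_display} {T : measurableType dT} {R : realType}.
Variable (P : probability T R).

Definition as_bounded (f : T -> R) : Prop :=
  measurable_fun setT f /\ exists C : R, {ae P, forall t, `|f t| <= C}.

Lemma as_bounded_Lfun f : as_bounded f -> f \in Lfun P 1.
Proof.
case=> mf [C hC]; apply/Lfun1_integrable; apply/integrableP; split.
  exact/measurable_EFinP.
apply: (@le_lt_trans _ _ (\int[P]_x (cst `|C|%:E x))%E).
  apply: ae_ge0_le_integral => //.
  - by apply/(measurable_EFinP _ (Num.norm \o f)); exact: measurableT_comp.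
  - by move=> t _ /=; rewrite lee_fin.
  - by apply: filterS hC => t ht _ /=; rewrite lee_fin; apply: le_trans ht (ler_norm _).
by rewrite integral_cst //= probability_setT mule1 ltry.
Qed.

Lemma as_bounded_cst c : as_bounded (fun=> c).
Proof. by split => //; exists `|c|; exact: aeW. Qed.

Lemma as_boundedD {f g} :
  as_bounded f -> as_bounded g -> as_bounded (fun t => f t + g t).
Proof.
case=> mf [C hC] [mg [D hD]]; split; first exact: measurable_funD.
exists (C + D); apply: filterS2 hC hD => t hf hg.
by apply: le_trans (ler_normD _ _) _; exact: lerD.
Qed.

Lemma as_boundedM {f g} :
  as_bounded f -> as_bounded g -> as_bounded (fun t => f t * g t).
Proof.
case=> mf [C hC] [mg [D hD]]; split; first exact: measurable_funM.
exists (`|C| * `|D|); apply: filterS2 hC hD => t hf hg.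
by rewrite normrM; apply: ler_pM => //; apply: le_trans (ler_norm _).
Qed.

Lemma as_boundedN {f} : as_bounded f -> as_bounded (fun t => - f t).
Proof.
move=> hf; have := as_boundedM (as_bounded_cst (-1)) hf.
by under eq_fun do rewrite mulN1r.
Qed.

Lemma as_bounded_sum (I : Type) (r : seq I) (F : I -> T -> R) :
  (forall i, as_bounded (F i)) -> as_bounded (fun t => \sum_(i <- r) F i t).
Proof.
move=> hF; elim: r => [|a r IH].
  by under eq_fun do rewrite big_nil; exact: as_bounded_cst.
by under eq_fun do rewrite big_cons; exact: as_boundedD.
Qed.

Lemma as_bounded_indic (A : set T) : measurable A -> as_bounded (\1_A : T -> R).
Proof.
move=> mA; split; first exact: measurable_indic.
by exists 1; apply: aeW => t; rewrite /indic; case: (t \in A); rewrite ?normr1 ?normr0.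
Qed.

Lemma Ex_fin_num {f} : as_bounded f -> ('E_P[f] \is a fin_num)%E.
Proof. by move=> /as_bounded_Lfun; exact: expectation_fin_num. Qed.

Lemma ExD {f g} : as_bounded f -> as_bounded g ->
  Ex P (fun t => f t + g t) = Ex P f + Ex P g.
Proof.
move=> hf hg; rewrite /Ex -fineD ?Ex_fin_num //; congr fine.
by apply: expectationD; exact: as_bounded_Lfun.
Qed.

Lemma ExZ a {f} : as_bounded f -> Ex P (fun t => a * f t) = a * Ex P f.
Proof.
move=> hf; rewrite /Ex.
have -> : ('E_P[fun t => (a * f t)%R] = a%:E * 'E_P[f])%E.
  rewrite -expectationZl; last exact: as_bounded_Lfun.
  by congr expectation; apply: funext => t /=; rewrite mulrC.
by rewrite -[in LHS](fineK (Ex_fin_num hf)) -EFinM.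
Qed.

Lemma ExN {f} : as_bounded f -> Ex P (fun t => - f t) = - Ex P f.
Proof.
move=> hf; rewrite -mulN1r -ExZ //.
by congr Ex; apply: funext => t; rewrite mulN1r.
Qed.

Lemma ExB {f g} : as_bounded f -> as_bounded g ->
  Ex P (fun t => f t - g t) = Ex P f - Ex P g.
Proof. by move=> hf hg; rewrite ExD ?ExN //; exact: as_boundedN. Qed.

Lemma Ex_cst c : Ex P (fun=> c) = c.
Proof. by rewrite /Ex expectation_cst. Qed.

Lemma Ex_sum (I : Type) (r : seq I) (F : I -> T -> R) :
  (forall i, as_bounded (F i)) ->
  Ex P (fun t => \sum_(i <- r) F i t) = \sum_(i <- r) Ex P (F i).
Proof.
move=> hF; elim: r => [|a r IH].
  by under eq_fun do rewrite big_nil; rewrite Ex_cst big_nil.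
under eq_fun do rewrite big_cons.
by rewrite ExD ?IH ?big_cons //; exact: as_bounded_sum.
Qed.

Lemma Ex_ge0 f : as_bounded f -> {ae P, forall t, 0 <= f t} -> 0 <= Ex P f.
Proof.
case=> mf _ f_ge0.
have -> : Ex P f = Ex P (fun t => `|f t|).
  rewrite /Ex unlock; congr fine; apply: ae_eq_integral => //.
  - exact/measurable_EFinP.
  - by apply/measurable_EFinP; exact: measurableT_comp.
  - by apply: filterS f_ge0 => t ft_ge0 _ /=; rewrite ger0_norm.
by apply: fine_ge0; apply: expectation_ge0 => t.
Qed.

Lemma Ex_abs_le f C : as_bounded f -> {ae P, forall t, `|f t| <= C} -> `|Ex P f| <= C.
Proof.
move=> hf f_le; rewrite ler_norml.
have below : 0 <= Ex P (fun t => C - f t).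
  apply: Ex_ge0; first exact: as_boundedD (as_bounded_cst C) (as_boundedN hf).
  by apply: filterS f_le => t; rewrite ler_norml subr_ge0 => /andP[].
have above : 0 <= Ex P (fun t => C + f t).
  apply: Ex_ge0; first exact: as_boundedD (as_bounded_cst C) hf.
  by apply: filterS f_le => t; rewrite ler_norml => /andP[? _]; lra.
rewrite (ExB (as_bounded_cst C) hf) Ex_cst in below.
rewrite (ExD (as_bounded_cst C) hf) Ex_cst in above.
lra.
Qed.

(* The staircase
   of [X] is a finite combination of such indicators and approximates [X]
   uniformly within [1/h]; let [h] grow. *)
Lemma Ex_mul_eq0_of_indicators (X eps : T -> R) :
  as_bounded X -> as_bounded eps ->
  (forall B : set R, measurable B -> Ex P (fun t => \1_(X @^-1` B) t * eps t) = 0) ->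
  Ex P (fun t => X t * eps t) = 0.
Proof.
move=> hX heps hB; have [mX [Cx X_le]] := hX; have [_ [Ce eps_le]] := heps.
have X_lt : {ae P, forall t, `|X t| < Cx + 1}.
  by apply: filterS X_le => t ?; lra.
have eps_le' : {ae P, forall t, `|eps t| <= `|Ce|}.
  by apply: filterS eps_le => t ?; apply: le_trans (ler_norm _).
have ind_bdd (B : set R) : measurable B -> as_bounded (\1_(X @^-1` B) : T -> R).
  by move=> mB; apply: as_bounded_indic; rewrite -[X @^-1` B]setTI; exact: mX.
have cell_bdd (a b : R) : as_bounded (\1_(X @^-1` `[a, b[%classic) : T -> R).
  by apply: ind_bdd; exact: measurable_itv.
apply: (@eq0_le_div_succ _ _ `|Ce|) => n.
pose h : R := n.+1%:R; have h_gt0 : 0 < h by rewrite /h ltr0n.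
pose K := (Num.truncn ((Cx + 1) * h)).+1.
have K_ge : (Cx + 1) * h <= K%:R by apply: ltW; exact: truncnS_gt.
have staircaseE t : staircase h K (X t) = \sum_(k < K + K) (k%:R - K%:R) / h *
    \1_(X @^-1` `[(k%:R - K%:R) / h, (k%:R - K%:R) / h + h^-1[%classic) t.
  by apply: eq_bigr => k _; rewrite /indic.
have g_bdd : as_bounded (fun t => staircase h K (X t)).
  under eq_fun do rewrite staircaseE.
  by apply: as_bounded_sum => k; exact: as_boundedM (as_bounded_cst _) (cell_bdd _ _).
have Eg : Ex P (fun t => staircase h K (X t) * eps t) = 0.
  under eq_fun do rewrite staircaseE mulr_suml.
  rewrite Ex_sum => [|k]; last first.
    exact: as_boundedM (as_boundedM (as_bounded_cst _) (cell_bdd _ _)) heps.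
  apply: big1 => k _; under eq_fun do rewrite -(mulrA ((k%:R - K%:R) / h)).
  by rewrite ExZ ?hB ?mulr0 //; exact: as_boundedM (cell_bdd _ _) heps.
have -> : Ex P (fun t => X t * eps t) =
    Ex P (fun t => (X t - staircase h K (X t)) * eps t).
  under [in RHS]eq_fun do rewrite mulrBl.
  by rewrite ExB ?Eg ?subr0 //; exact: as_boundedM.
apply: Ex_abs_le.
  exact: as_boundedM (as_boundedD hX (as_boundedN g_bdd)) heps.
apply: filterS2 X_lt eps_le' => t Xt_lt eps_t_le.
rewrite normrM mulrC; apply: ler_pM => //; exact: staircase_close h_gt0 Xt_lt K_ge.
Qed.

End BoundedExpectation.

Arguments as_boundedD {dT T R P f g}.
Arguments as_boundedM {dT T R P f g}.
Arguments as_boundedN {dT T R P f}.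
Arguments ExD {dT T R P f g}.
Arguments ExZ {dT T R P} a {f}.

(* A sum over ['I_d] of a function vanishing off [F] is a sum over the
   enumeration of [F]; this transports vectors to the principal submatrix. *)
Lemma sum_over_support (V : nmodType) (d : nat) (F : {set 'I_d}) (G : 'I_d -> V) :
  (forall i, i \notin F -> G i = 0) -> \sum_i G i = \sum_(a < #|F|) G (enum_val a).
Proof.
by move=> G0; rewrite -big_enum_val [LHS](bigID (mem F)) /= [X in _ + X]big1 ?addr0.
Qed.

Lemma supp_sub_eq0 {R : realType} {d : nat} {S : {set 'I_d}} {b : 'I_d -> R} :
  supp b \subset S -> forall j, j \notin S -> b j = 0.
Proof.
move=> suppS j; apply: contraNeq => bj_neq0.
by apply: (fintype.subsetP suppS); rewrite inE.
Qed.

Section Regression.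
Context {dT : measure_display} {T : measurableType dT} {R : realType}.
Context {P : probability T R} {d : nat} {x : 'I_d -> T -> R} {y : T -> R}.

Lemma Sigma_rayleigh (F : {set 'I_d}) (rho : R) (v : 'I_d -> R) :
  (forall a, eigenvalue (SigmaF P x F) a -> rho <= a) ->
  (forall i, i \notin F -> v i = 0) ->
  rho * \sum_i v i ^+ 2 <= \sum_i \sum_j v i * Sigma P x i j * v j.
Proof.
move=> eig_ge v0; pose u : 'rV[R]_#|F| := \row_a v (enum_val a).
have sym a b : SigmaF P x F a b = SigmaF P x F b a by rewrite !mxE covarianceC.
have := @rayleigh_bound R #|F| (SigmaF P x F) sym rho eig_ge u.
have -> : sqnorm u = \sum_i v i ^+ 2.
  rewrite (@sum_over_support _ _ F) => [|i /v0 ->]; last by rewrite expr0n.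
  by apply: eq_bigr => a _; rewrite mxE.
have -> : qform (SigmaF P x F) u u = \sum_i \sum_j v i * Sigma P x i j * v j.
  rewrite (@sum_over_support _ _ F) => [|i /v0 vi0]; last first.
    by apply: big1 => j _; rewrite vi0 !mul0r.
  apply: eq_bigr => a _; rewrite (@sum_over_support _ _ F) => [|j /v0 ->]; last first.
    by rewrite mulr0.
  by apply: eq_bigr => b _; rewrite !mxE.
by [].
Qed.

Hypothesis x_bdd : forall i, as_bounded P (x i).
Hypothesis y_bdd : as_bounded P y.

Lemma inner_bdd (b : 'I_d -> R) : as_bounded P (inner x b).
Proof.
by apply: as_bounded_sum => i; exact: as_boundedM (as_bounded_cst P _) (x_bdd i).
Qed.

Lemma residual_bdd (b : 'I_d -> R) : as_bounded P (fun t => y t - inner x b t).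
Proof. by apply: as_boundedD y_bdd _; apply: as_boundedN; exact: inner_bdd. Qed.

Lemma Sigma_second_moment : (forall i, Ex P (x i) = 0) ->
  forall i j, Sigma P x i j = Ex P (fun t => x i t * x j t).
Proof.
move=> centred i j; rewrite /Sigma mxE covariance.unlock /Ex.
congr (fine (expectation _ _)); apply: funext => t /=.
by have := centred i; have := centred j; rewrite /Ex => -> ->; rewrite !fctE /= !subr0.
Qed.

Lemma Zc_Sigma {bstar b : 'I_d -> R} :
  (forall i, Ex P (x i) = 0) -> (forall i, Zc P x y bstar i = 0) ->
  forall i, Zc P x y b i = \sum_j Sigma P x i j * (bstar j - b j).
Proof.
move=> centred orth i; rewrite /Zc.
have -> : (fun t => x i t * (y t - inner x b t)) = (fun t =>
    x i t * (y t - inner x bstar t) + \sum_j (bstar j - b j) * (x i t * x j t)).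
  apply: funext => t.
  have -> : y t - inner x b t =
      (y t - inner x bstar t) + (inner x bstar t - inner x b t) by ring.
  rewrite /inner -sumrB mulrDr mulr_sumr; congr (_ + _).
  by apply: eq_bigr => j _; ring.
have xx_bdd j : as_bounded P (fun t => x i t * x j t).
  exact: as_boundedM (x_bdd i) (x_bdd j).
rewrite ExD; last 2 first.
- exact: as_boundedM (x_bdd i) (residual_bdd bstar).
- by apply: as_bounded_sum => j; exact: as_boundedM (as_bounded_cst P _) (xx_bdd j).
have := orth i; rewrite /Zc => ->; rewrite add0r Ex_sum => [|j]; last first.
  exact: as_boundedM (as_bounded_cst P _) (xx_bdd j).
apply: eq_bigr => j _.
by rewrite ExZ // Sigma_second_moment // mulrC.
Qed.

(* First-order optimality of the restricted fit: moving [bS] along a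
   coordinate of [S] cannot decrease the risk, so the residual is
   uncorrelated with the features indexed by [S]. *)
Lemma Zc_eq0_on_support {S : {set 'I_d}} {bS : 'I_d -> R} :
  is_betaS P x y S bS -> forall i, i \in S -> Zc P x y bS i = 0.
Proof.
move=> [suppS bS_min] i iS.
pose r t := y t - inner x bS t.
have r_bdd : as_bounded P r := residual_bdd bS.
have xr_bdd : as_bounded P (fun t => x i t * r t) := as_boundedM (x_bdd i) r_bdd.
have xx_bdd : as_bounded P (fun t => x i t * x i t) := as_boundedM (x_bdd i) (x_bdd i).
have -> : Zc P x y bS i = Ex P (fun t => x i t * r t) by [].
apply/eqP; rewrite -oppr_eq0; apply/eqP.
apply: (@nonneg_quadratic_linear_coef _ (Ex P (fun t => x i t * x i t))) => s.
pose b j := bS j + s * (j == i)%:R.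
have supp_b : supp b \subset S.
  apply/fintype.subsetP => j; rewrite inE /b; case: (eqVneq j i) => [-> //|_].
  by rewrite mulr0 addr0 => bSj; apply: (fintype.subsetP suppS); rewrite inE.
have := bS_min b supp_b; rewrite /risk.
have -> : (fun t => (y t - inner x b t) ^+ 2) = (fun t =>
    r t ^+ 2 + ((-2 * s) * (x i t * r t) + s ^+ 2 * (x i t * x i t))).
  apply: funext => t.
  have -> : inner x b t = inner x bS t + s * x i t.
    rewrite /inner /b; under eq_bigr do rewrite mulrDl.
    rewrite big_split /=; congr (_ + _).
    rewrite (bigD1 i) //= eqxx mulr1 big1 ?addr0 // => j /negPf ->.
    by rewrite mulr0 mul0r.
  by rewrite /r; ring.
have cst_bdd (a : R) := as_bounded_cst P a.
rewrite (ExD (as_boundedM r_bdd r_bdd)); last first.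
  exact: as_boundedD (as_boundedM (cst_bdd _) xr_bdd) (as_boundedM (cst_bdd _) xx_bdd).
rewrite (ExD (as_boundedM (cst_bdd _) xr_bdd) (as_boundedM (cst_bdd _) xx_bdd)).
rewrite !ExZ //; lra.
Qed.

(* [E[eps | x] = 0] makes the residual of [bstar] uncorrelated with each
   feature: test it against the events [{x_i in B}]. *)
Lemma Zc_eq0_of_cond_mean_zero (bstar : 'I_d -> R) :
  cond_mean_zero P x (fun t => y t - inner x bstar t) ->
  forall i, Zc P x y bstar i = 0.
Proof.
move=> cmz i; apply: Ex_mul_eq0_of_indicators (x_bdd i) (residual_bdd bstar) _.
move=> B mB; apply: (congr1 fine (cmz _ _)).
by apply: sub_gen_smallest; exists i, B.
Qed.

(* The energy [sum_i (bstar_i - bS_i) Z_i^S] only involves the coordinates of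
   [D = supp bstar \ S]: the correlations vanish on [S] and the difference
   vanishes off [supp bstar].  By Cauchy-Schwarz it is thus at most the largest
   residual correlation off [S] times [sqrt |D|] times [|bstar - bS|]. *)
Lemma energy_le_max_corr {S : {set 'I_d}} {bS bstar : 'I_d -> R} :
  is_betaS P x y S bS -> S \subset supp bstar ->
  \sum_i (bstar i - bS i) * Zc P x y bS i <=
  \big[Num.max/0]_(i | i \notin S) `|Zc P x y bS i| *
    (Num.sqrt #|supp bstar :\: S|%:R * l2norm (fun i => bstar i - bS i)).
Proof.
move=> bS_opt S_sub; have [suppS _] := bS_opt.
set D := supp bstar :\: S; set Zmax := \big[Num.max/0]_(i | i \notin S) _.
pose dl i := bstar i - bS i.
have bS0 := supp_sub_eq0 suppS.
have on_D : \sum_i dl i * Zc P x y bS i = \sum_(i in D) dl i * Zc P x y bS i.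
  rewrite [LHS](bigID (mem D)) /= [X in _ + X]big1 ?addr0 // => i.
  rewrite finset.in_setD negb_and negbK => /orP[iS | i_out].
    by rewrite (Zc_eq0_on_support bS_opt _ iS) mulr0.
  have iS : i \notin S by apply: contra i_out; exact: (fintype.subsetP S_sub).
  by rewrite /dl bS0 // subr0; move: i_out; rewrite inE negbK => /eqP ->; rewrite mul0r.
rewrite on_D; apply: le_trans (_ : Zmax * \sum_(i in D) `|dl i| <= _).
  rewrite mulr_sumr; apply: ler_sum => i iD.
  have iS : i \notin S by move: iD; rewrite finset.in_setD => /andP[].
  apply: le_trans (ler_norm _) _; rewrite normrM mulrC ler_wpM2r //.
  exact: le_bigmax_cond.
apply: ler_wpM2l; first exact: bigmax_ge_id.
apply: le_trans (sum_abs_le_sqrt_card D dl) _.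
rewrite ler_wpM2l ?sqrtr_ge0 // ler_wsqrtr // [leRHS](bigID (mem D)) /= lerDl.
by apply: sumr_ge0 => i _; exact: sqr_ge0.
Qed.
End Regression.

Theorem mainTheorem8 (dT : measure_display) (T : measurableType dT) (R : realType)
  (P : probability T R) (d : nat) (x : 'I_d -> T -> R) (y : T -> R)
  (betastar : 'I_d -> R) (rho L M : R) (S : {set 'I_d}) (bS : 'I_d -> R) :
  (* measurability of the data *)
  (forall i, measurable_fun setT (x i)) -> measurable_fun setT y ->
  (* E[x] = 0 *)
  (forall i, Ex P (x i) = 0) ->
  (* y = <beta*, x> + eps with E[eps | x] = 0 *)
  cond_mean_zero P x (fun t => y t - inner x betastar t) ->
  (* eigenvalue bounds on Sigma_F for |F| = s* *)
  0 < rho -> rho <= L ->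
  (forall F : {set 'I_d}, #|F| = #|supp betastar| ->
     forall a, eigenvalue (SigmaF P x F) a -> rho <= a <= L) ->
  (* mu_F < 1 for |F| = s* *)
  (forall F : {set 'I_d}, #|F| = #|supp betastar| ->
     forall j, j \notin F ->
       \sum_(k < #|F|) `|(invmx (SigmaF P x F) *m CovFj P x F j) k ord0| < 1) ->
  (* a.s. boundedness *)
  {ae P, forall t, `|y t| < 1} ->
  {ae P, forall t, forall i, `|x i t| < M} ->
  (* S strictly contained in S*, bS = beta^S *)
  S \proper supp betastar ->
  is_betaS P x y S bS ->
  let sstar := #|supp betastar| in
  let k := #|S| in
  let c := Num.sqrt (rho ^+ 3 / L) * (Num.sqrt ((sstar - k)%:R))^-1 in
  c * l2norm (fun i => betastar i - bS i)
    <= \big[Num.max/0]_(i | i \notin S) `|Zc P x y bS i| /\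
  c * l2norm (fun i => if i \in supp betastar :\: S then betastar i else 0)
    <= c * l2norm (fun i => betastar i - bS i).
Proof.
move=> mx my centred cmz rho_gt0 rho_le_L eig _ y_lt x_lt S_proper bS_opt sstar k c.
have x_bdd i : as_bounded P (x i).
  by split=> //; exists M; apply: filterS x_lt => t /(_ i)/ltW.
have y_bdd : as_bounded P y by split=> //; exists 1; apply: filterS y_lt => t /ltW.
have S_sub := proper_sub S_proper.
have bS_off := supp_sub_eq0 bS_opt.1.
pose dl i := betastar i - bS i.
have energy_ge : rho * \sum_i dl i ^+ 2 <= \sum_i dl i * Zc P x y bS i.
  have Zstar := Zc_eq0_of_cond_mean_zero x_bdd y_bdd betastar cmz.
  under [leRHS]eq_bigr do rewrite (Zc_Sigma x_bdd y_bdd centred Zstar) mulr_sumr.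
  under [leRHS]eq_bigr do under eq_bigr do rewrite mulrA.
  apply: Sigma_rayleigh => [a /(eig _ erefl)/andP[] // | j j_out].
  rewrite /dl bS_off; last by apply: contra j_out; exact: (fintype.subsetP S_sub).
  by move: j_out; rewrite inE negbK subr0 => /eqP.
have card_D : #|supp betastar :\: S| = (sstar - k)%N.
  by rewrite cardsD (finset.setIidPr S_sub).
have c_ge0 : 0 <= c by rewrite mulr_ge0 ?invr_ge0 ?sqrtr_ge0.
split.
- apply: scaled_corr_bound => //; first by rewrite ltr0n subn_gt0 proper_card.
  + exact: sqrtr_ge0.
  + exact: bigmax_ge_id.
  rewrite sqr_sqrtr ?sumr_ge0 // => [|i _]; last exact: sqr_ge0.
  by rewrite -card_D; apply: le_trans energy_ge (energy_le_max_corr x_bdd y_bdd bS_opt S_sub).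
- apply: ler_wpM2l => //; apply: ler_wsqrtr; apply: ler_sum => i _.
  case: ifP => [|_]; last by rewrite expr0n sqr_ge0.
  by rewrite finset.in_setD => /andP[iS _]; rewrite bS_off // subr0.
Qed.
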